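(* The Sierpinski affine system $\mathsf{S}$ is sober.
   Context: Fix a variety $\mathbf{A}$ of algebras (full subcategory of the category of $\Omega$-algebras and homomorphisms closed under products, subalgebras and homomorphic images) having a free algebra $S$ over a singleton $\{*\}$ with universal map $\eta:\{*\}\to|S|$; for an algebra $A$ and $a\in A$, $\overline{a}^A:S\to A$ is the unique homomorphism with $\eta( * )\mapsto a$. Fix an $\mathbf{A}$-algebra $L$; $L^X$ is the power algebra. An affine system is $(X,\kappa,A)$ with $X$ a set, $A$ an algebra, $\kappa:A\to L^X$ a homomorphism. For an algebra $A$, $Pt_L(A)$ is the set of homomorphisms $A\to L$; for a system $(X,\kappa,A)$, $\ell:X\to Pt_L(A)$ is given by $\ell(x)(a)=\kappa(a)(x)$, and the system is sober if $\ell$ is bijective. The Sierpinski affine system is $\mathsf{S}=(|L|,\kappa_S,S)$ with $\kappa_S:S\to L^{|L|}$ the unique homomorphism with $\kappa_S(s)(b)=\overline{b}^L(s)$ (equivalently $\kappa_S(\eta( * ))=\mathrm{id}_L$). *)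

From Stdlib Require Import ClassicalEpsilon FunctionalExtensionality.

Set Implicit Arguments.
Unset Strict Implicit.

Record signature := Signature { op : Type; arity : op -> Type }.

Record algebra (Sg : signature) := Algebra {
  carrier :> Type;
  ops : forall o : op Sg, (arity o -> carrier) -> carrier }.

Arguments ops {Sg} a o args : rename.

Definition is_hom {Sg : signature} (A B : algebra Sg) (f : A -> B) : Prop :=
  forall (o : op Sg) (args : arity o -> A),
    f (ops A o args) = ops B o (fun i => f (args i)).

Definition prod_alg {Sg : signature} (I : Type) (F : I -> algebra Sg) : algebra Sg :=
  @Algebra Sg (forall i, F i) (fun o args i => ops (F i) o (fun j => args j i)).

Definition power_alg {Sg : signature} (L : algebra Sg) (X : Type) : algebra Sg :=
  prod_alg (fun _ : X => L).

Definition op_closed {Sg : signature} (A : algebra Sg) (P : A -> Prop) : Prop :=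
  forall (o : op Sg) (args : arity o -> A), (forall i, P (args i)) -> P (ops A o args).

Definition sub_alg {Sg : signature} (A : algebra Sg) (P : A -> Prop)
  (HP : op_closed P) : algebra Sg :=
  @Algebra Sg {x : A | P x}
    (fun o args => exist P (ops A o (fun i => proj1_sig (args i)))
                     (HP o _ (fun i => proj2_sig (args i)))).

Record is_variety {Sg : signature} (V : algebra Sg -> Prop) : Prop := {
  variety_prod : forall (I : Type) (F : I -> algebra Sg),
      (forall i, V (F i)) -> V (prod_alg F);
  variety_sub : forall (A : algebra Sg) (P : A -> Prop) (HP : op_closed P),
      V A -> V (sub_alg HP);
  variety_himg : forall (A B : algebra Sg) (f : A -> B),
      V A -> is_hom f -> (forall b : B, exists a, f a = b) -> V B }.

Definition is_free_singleton {Sg : signature} (V : algebra Sg -> Prop)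
  (S : algebra Sg) (eta : S) : Prop :=
  V S /\
  forall (B : algebra Sg), V B -> forall b : B,
    exists h : S -> B, (is_hom h /\ h eta = b) /\
      forall h' : S -> B, is_hom h' -> h' eta = b -> forall s, h' s = h s.

Arguments is_free_singleton {Sg} V S eta.

Definition bbar {Sg : signature} {V : algebra Sg -> Prop} {S : algebra Sg} {eta : S}
  (HS : is_free_singleton V S eta) (B : algebra Sg) (HB : V B) (b : B) : S -> B :=
  proj1_sig (constructive_indefinite_description _ (proj2 HS B HB b)).

Arguments bbar {Sg V S eta} HS B HB b _.

Lemma bbar_hom {Sg : signature} {V : algebra Sg -> Prop} {S : algebra Sg} {eta : S}
  (HS : is_free_singleton V S eta) (B : algebra Sg) (HB : V B) (b : B) :
  is_hom (bbar HS B HB b).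
Proof.
  unfold bbar; exact (proj1 (proj1 (proj2_sig (constructive_indefinite_description _ (proj2 HS B HB b))))).

Qed.

Arguments bbar_hom {Sg V S eta} HS B HB b.

Record affine_system {Sg : signature} (V : algebra Sg -> Prop) (L : algebra Sg) := {
  as_X : Type;
  as_A : algebra Sg;
  as_A_in : V as_A;
  as_kappa : as_A -> power_alg L as_X;
  as_kappa_hom : is_hom as_kappa }.

Arguments as_X {Sg V L} a.
Arguments as_A {Sg V L} a.
Arguments as_kappa {Sg V L} a _ _.

Definition Pt {Sg : signature} (L A : algebra Sg) : Type :=
  {h : A -> L | is_hom h}.

Lemma ell_hom {Sg : signature} {V : algebra Sg -> Prop} {L : algebra Sg}
  (s : affine_system V L) (x : as_X s) :
  is_hom (fun a : as_A s => as_kappa s a x).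
Proof.
  intros o args. simpl. rewrite (@as_kappa_hom Sg V L s o args). reflexivity.
Qed.

Arguments ell_hom {Sg V L} s x.

Definition ell {Sg : signature} {V : algebra Sg -> Prop} {L : algebra Sg}
  (s : affine_system V L) (x : as_X s) : Pt L (as_A s) :=
  exist _ (fun a => as_kappa s a x) (ell_hom s x).

Arguments ell {Sg V L} s x.

Definition sober {Sg : signature} {V : algebra Sg -> Prop} {L : algebra Sg}
  (s : affine_system V L) : Prop :=
  (forall x y, ell s x = ell s y -> x = y) /\
  (forall p : Pt L (as_A s), exists x, ell s x = p).

Definition kappa_S {Sg : signature} {V : algebra Sg -> Prop} {S : algebra Sg} {eta : S}
  (HS : is_free_singleton V S eta) (L : algebra Sg) (HL : V L) :
  S -> power_alg L (carrier L) :=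
  fun s b => bbar HS L HL b s.

Arguments kappa_S {Sg V S eta} HS L HL _ _.

Lemma kappa_S_hom {Sg : signature} {V : algebra Sg -> Prop} {S : algebra Sg} {eta : S}
  (HS : is_free_singleton V S eta) (L : algebra Sg) (HL : V L) :
  is_hom (kappa_S HS L HL).
Proof.
  intros o args. unfold kappa_S. apply functional_extensionality_dep; intro b.
  rewrite (bbar_hom HS L HL b o args). reflexivity.
Qed.

Arguments kappa_S_hom {Sg V S eta} HS L HL.

Definition sierpinski {Sg : signature} {V : algebra Sg -> Prop} {S : algebra Sg} {eta : S}
  (HS : is_free_singleton V S eta) (L : algebra Sg) (HL : V L) : affine_system V L :=
  {| as_X := carrier L; as_A := S; as_A_in := proj1 HS;
     as_kappa := kappa_S HS L HL; as_kappa_hom := kappa_S_hom HS L HL |}.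

(* A point p : S -> L of the Sierpinski system is a homomorphism out of the
   free algebra on eta, hence equals bbar (p eta); and the point ell b sends
   eta to b.  So evaluation at eta is a two-sided inverse of ell. *)

From Stdlib Require Import ClassicalEpsilon FunctionalExtensionality ProofIrrelevance.

Set Implicit Arguments.
Unset Strict Implicit.

Section FreeSingleton.

Variables (Sg : signature) (V : algebra Sg -> Prop) (S : algebra Sg) (eta : S).
Hypothesis HS : is_free_singleton V S eta.

Lemma bbar_eta (B : algebra Sg) (HB : V B) (b : B) : bbar HS B HB b eta = b.
Proof.
  unfold bbar.
  exact (proj2 (proj1 (proj2_sig (constructive_indefinite_description _ (proj2 HS B HB b))))).
Qed.

Lemma bbar_unique (B : algebra Sg) (HB : V B) (h : S -> B) :
  is_hom h -> h = bbar HS B HB (h eta).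
Proof.
  intro Hh; apply functional_extensionality; intro s.
  unfold bbar.
  exact (proj2 (proj2_sig (constructive_indefinite_description _ (proj2 HS B HB (h eta))))
           h Hh eq_refl s).
Qed.

Variables (L : algebra Sg) (HL : V L).

Lemma sierpinski_ell_eta (b : L) : proj1_sig (ell (sierpinski HS HL) b) eta = b.
Proof. exact (bbar_eta HL b). Qed.

Lemma sierpinski_ell_at_eta (p : Pt L S) :
  ell (sierpinski HS HL) (proj1_sig p eta) = p.
Proof.
  destruct p as [p Hp]; apply subset_eq_compat.
  symmetry; exact (bbar_unique HL Hp).
Qed.

End FreeSingleton.

Theorem proposition16 (Sg : signature) (V : algebra Sg -> Prop) (HV : is_variety V)
  (S : algebra Sg) (eta : S) (HS : is_free_singleton V S eta)
  (L : algebra Sg) (HL : V L) :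
  sober (sierpinski HS HL).
Proof.
  split.
  - intros x y Hxy.
    rewrite <- (sierpinski_ell_eta HS HL x), <- (sierpinski_ell_eta HS HL y), Hxy.
    reflexivity.
  - intro p; exists (proj1_sig p eta); exact (sierpinski_ell_at_eta HS HL p).
Qed.
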